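(* Let $d\geq 1$, let $p\in[1,\infty)\setminus\{2\}$, let $\beta>0$, and let $\bm{Q}_1,\bm{Q}_2$ be $d\times d$ symmetric positive definite matrices. Define $$\bm{Q}(\beta)=\left(1+\frac{1}{\beta}\right)^{1/p}\bm{Q}_1+(1+\beta)^{1/p}\bm{Q}_2 .$$ Then $\mathcal{E}(\bm{0},\bm{Q}(\beta))\supseteq \mathcal{E}(\bm{0},\bm{Q}_1)+_p\mathcal{E}(\bm{0},\bm{Q}_2)$.
   Context: For $\bm{q}\in\mathbb{R}^d$ and a symmetric positive definite $d\times d$ matrix $\bm{Q}$, the ellipsoid is $\mathcal{E}(\bm{q},\bm{Q})=\{\bm{x}\in\mathbb{R}^d:(\bm{x}-\bm{q})^\top\bm{Q}^{-1}(\bm{x}-\bm{q})\leq 1\}$. The support function of a compact convex set $\mathcal{K}\subset\mathbb{R}^d$ is $h_{\mathcal{K}}(\bm{y})=\sup\{\langle\bm{x},\bm{y}\rangle:\bm{x}\in\mathcal{K}\}$, $\bm{y}\in\mathbb{R}^d$; it determines $\mathcal{K}$ uniquely. For compact convex sets $\mathcal{K}_1,\mathcal{K}_2\subset\mathbb{R}^d$ and $1\le p<\infty$, the (Firey) $p$-sum $\mathcal{K}_1+_p\mathcal{K}_2$ is the compact convex set whose support function is $h(\bm{y})=\left(h_{\mathcal{K}_1}^p(\bm{y})+h_{\mathcal{K}_2}^p(\bm{y})\right)^{1/p}$. (For $\mathcal{E}(\bm{0},\bm{Q})$ one has $h(\bm{y})=\sqrt{\bm{y}^\top\bm{Q}\bm{y}}\ge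 0$.) *)

From HB Require Import structures.
From mathcomp Require Import all_boot all_order all_algebra.
From mathcomp Require Import all_classical all_reals all_analysis.
Set Implicit Arguments. Unset Strict Implicit. Unset Printing Implicit Defensive.
Import Order.TTheory GRing.Theory Num.Theory.
Import numFieldNormedType.Exports.
Local Open Scope classical_set_scope.
Local Open Scope ring_scope.

Section Defs.
Variables (R : realType) (d : nat).

Definition dotv (x y : 'cV[R]_d) : R := (x^T *m y) ord0 ord0.

Definition sym_pd (Q : 'M[R]_d) : Prop :=
  Q^T = Q /\ (forall x : 'cV[R]_d, x != 0 -> 0 < (x^T *m Q *m x) ord0 ord0).

Definition ellipsoid (q : 'cV[R]_d) (Q : 'M[R]_d) : set 'cV[R]_d :=
  [set x | ((x - q)^T *m invmx Q *m (x - q)) ord0 ord0 <= 1].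

Definition support_fun (K : set 'cV[R]_d) (y : 'cV[R]_d) : R :=
  sup [set dotv x y | x in K].

Definition convex_set (K : set 'cV[R]_d) : Prop :=
  forall x y, K x -> K y -> forall t : R, 0 <= t <= 1 ->
    K (t *: x + (1 - t) *: y).

Definition is_firey_psum (p : R) (K1 K2 K : set 'cV[R]_d) : Prop :=
  [/\ compact K, convex_set K &
      forall y, support_fun K y =
        powR (powR (support_fun K1 y) p + powR (support_fun K2 y) p) p^-1].

End Defs.

From HB Require Import structures.
From mathcomp Require Import all_boot all_order all_algebra.
From mathcomp Require Import all_classical all_reals all_analysis.
From mathcomp Require Import ring lra.
Set Implicit Arguments. Unset Strict Implicit. Unset Printing Implicit Defensive.
Import Order.TTheory GRing.Theory Num.Theory.
Import numFieldNormedType.Exports.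
Local Open Scope classical_set_scope.
Local Open Scope ring_scope.

(* Write [h_i] for the support function of [E(0, Q_i)], so that
   [h_i(y)^2 <= y^T Q_i y]. A compact set [K] lies in [E(0, Q)] as soon as
   [h_K(y)^2 <= y^T Q y] for every [y]: test this at [y = Q^-1 x] for [x] in [K].
   It therefore suffices to bound the scalar [(h_1^p + h_2^p)^(2/p)] by
   [(1 + 1/beta)^(1/p) h_1^2 + (1 + beta)^(1/p) h_2^2]. For [p <= 2] this is
   the convexity of [s |-> s^(2/p)] with the weights [1/(1 + 1/beta)] and
   [1/(1 + beta)], which sum to 1; for [p > 2] it is the subadditivity of
   [s |-> s^(2/p)], both coefficients being at least 1. *)

Section PowerInequalities.
Variable R : realType.
Implicit Types (r u v A B : R).

Lemma powRD_le r A B : 0 < r <= 1 -> 0 <= A -> 0 <= B ->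
  (A + B) `^ r <= A `^ r + B `^ r.
Proof.
move=> /andP[r0 r1] A0 B0.
have [AB0|ABp] := eqVneq (A + B) 0.
  by rewrite AB0 powR0 ?gt_eqF // addr_ge0 ?powR_ge0.
have S0 : 0 < A + B by rewrite lt0r ABp addr_ge0.
have share (X : R) : 0 <= X <= A + B -> X / (A + B) * (A + B) `^ r <= X `^ r.
  move=> /andP[X0 XS]; have [->|Xn0] := eqVneq X 0; first by rewrite !mul0r powR_ge0.
  rewrite -{2}(divfK ABp X) powRM ?divr_ge0 ?(ltW S0) //.
  apply: ler_wpM2r; first exact: powR_ge0.
  by apply: ger1_powR => //; rewrite ler_pdivrMr // mul1r XS andbT divr_gt0 // lt0r Xn0.
apply: le_trans (lerD (share A _) (share B _)); last 2 first.
- by rewrite A0 lerDl.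
- by rewrite B0 lerDr.
by rewrite -!mulrDl divff ?mul1r.
Qed.

Lemma ge1_powRD_le r u v A B : 1 <= r -> 0 < u -> 0 < v -> u^-1 + v^-1 = 1 ->
  0 <= A -> 0 <= B -> (A + B) `^ r <= u `^ (r - 1) * A `^ r + v `^ (r - 1) * B `^ r.
Proof.
move=> r1 u0 v0 uv A0 B0.
have r0 : 0 < r by apply: lt_le_trans r1.
have t0 : 0 <= u^-1 by rewrite invr_ge0 ltW.
have t1 : u^-1 <= 1 by rewrite -uv lerDl invr_ge0 ltW.
have onem_u : 1 - u^-1 = v^-1 by rewrite -uv addrC addKr.
have weight (w X : R) : 0 < w -> 0 <= X -> w^-1 * (w * X) `^ r = w `^ (r - 1) * X `^ r.
  move=> w0 X0; rewrite powRM ?(ltW w0) // mulrA; congr (_ * _).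
  by rewrite powRB ?(gt_eqF w0) ?implybT // powRr1 ?(ltW w0) // mulrC.
rewrite -(weight u) // -(weight v) // -onem_u.
have -> : A + B = u^-1 * (u * A) + (1 - u^-1) * (v * B).
  by rewrite onem_u !mulrA !mulVf ?gt_eqF // !mul1r.
apply: (convex_powR r1 (Itv01 t0 t1)); rewrite inE /= in_itv /= andbT.
- by rewrite mulr_ge0 // ltW.
- by rewrite mulr_ge0 // ltW.
Qed.

Lemma firey_sqr_le (p beta h1 h2 : R) : 1 <= p -> 0 < beta -> 0 <= h1 -> 0 <= h2 ->
  ((h1 `^ p + h2 `^ p) `^ p^-1) ^+ 2 <=
  (1 + beta^-1) `^ p^-1 * h1 ^+ 2 + (1 + beta) `^ p^-1 * h2 ^+ 2.
Proof.
move=> p1 b0 h10 h20.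
have p0 : 0 < p by apply: lt_le_trans p1.
set u := 1 + beta^-1; set v := 1 + beta; set r := p^-1 * 2.
have u1 : 1 <= u by rewrite lerDl invr_ge0 ltW.
have v1 : 1 <= v by rewrite lerDl ltW.
have uv : u^-1 + v^-1 = 1.
  by rewrite /u /v; field; rewrite !gt_eqF ?addr_gt0 ?invr_gt0.
have grow (w s h : R) : 1 <= w -> s <= p^-1 -> w `^ s * h ^+ 2 <= w `^ p^-1 * h ^+ 2.
  by move=> w1 sp; rewrite ler_wpM2r ?sqr_ge0 ?ler_powR.
have powR_sqr (h : R) : 0 <= h -> (h `^ p) `^ r = h ^+ 2.
  by move=> h0; rewrite -powRrM /r mulrA divff ?gt_eqF // mul1r powR_mulrn.
rewrite -powR_mulrn ?powR_ge0 // -powRrM -/r.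
have [p2|p2] := leP p 2.
- have r1 : 1 <= r by rewrite /r ler_pdivlMl // mulr1.
  have pinv1 : p^-1 <= 1 by rewrite invf_le1.
  have sp : r - 1 <= p^-1 by rewrite /r; lra.
  have u0 : 0 < u by apply: lt_le_trans u1.
  have v0 : 0 < v by apply: lt_le_trans v1.
  apply: le_trans (ge1_powRD_le r1 u0 v0 uv (powR_ge0 _ _) (powR_ge0 _ _)) _.
  by rewrite !powR_sqr // lerD ?grow.
- have r01 : 0 < r <= 1.
    by rewrite /r mulr_gt0 ?invr_gt0 //= ler_pdivrMl // mulr1 ltW.
  apply: le_trans (powRD_le r01 (powR_ge0 _ _) (powR_ge0 _ _)) _.
  rewrite !powR_sqr //.
  have := lerD (grow u 0 h1 u1 _) (grow v 0 h2 v1 _).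
  by rewrite !powRr0 !mul1r; apply; rewrite invr_ge0 ltW.
Qed.
End PowerInequalities.

Section Ellipsoids.
Variables (R : realType) (d : nat).
Implicit Types (Q : 'M[R]_d) (u v w x y z : 'cV[R]_d) (a b : R).

Definition qform Q u v : R := (u^T *m Q *m v) ord0 ord0.

Lemma qformC Q u v : Q^T = Q -> qform Q u v = qform Q v u.
Proof.
have tr11 (A : 'M[R]_1) : A ord0 ord0 = A^T ord0 ord0 by rewrite mxE.
by move=> QT; rewrite /qform tr11 !trmx_mul trmxK QT mulmxA.
Qed.

Lemma qformBZl Q a b u w v :
  qform Q (a *: u - b *: w) v = a * qform Q u v - b * qform Q w v.
Proof.
rewrite /qform; have -> : (a *: u - b *: w)^T = a *: u^T - b *: w^T.
  by rewrite linearB /= !linearZ.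
by rewrite !mulmxBl -!scalemxAl !mxE.
Qed.

Lemma qformBZr Q a b v u w :
  qform Q v (a *: u - b *: w) = a * qform Q v u - b * qform Q v w.
Proof. by rewrite /qform !mulmxBr -!scalemxAr !mxE. Qed.

Lemma qformDZ (Q1 Q2 : 'M[R]_d) a b u v :
  qform (a *: Q1 + b *: Q2) u v = a * qform Q1 u v + b * qform Q2 u v.
Proof. by rewrite /qform mulmxDr mulmxDl -!scalemxAr -!scalemxAl !mxE. Qed.

Lemma qformx0 Q u : qform Q u 0 = 0.
Proof. by rewrite /qform mulmx0 mxE. Qed.

Lemma qform_ge0 Q z : sym_pd Q -> 0 <= qform Q z z.
Proof.
move=> [_ Qpos]; have [->|z0] := eqVneq z 0; first by rewrite qformx0.
exact/ltW/Qpos.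
Qed.

Lemma qform_cauchy_schwarz Q u v : sym_pd Q ->
  qform Q u v ^+ 2 <= qform Q u u * qform Q v v.
Proof.
move=> Qpd; have [->|v0] := eqVneq v 0; first by rewrite !qformx0 expr0n mulr0.
have c0 : 0 < qform Q v v by case: Qpd => _ /(_ v v0).
set a := qform Q u u; set b := qform Q u v; set c := qform Q v v.
(* [0 <= q(c u - b v, c u - b v)] expands to [0 <= c (c a - b^2)]. *)
have := qform_ge0 (c *: u - b *: v) Qpd.
rewrite qformBZl !qformBZr (qformC v u) ?(proj1 Qpd) // -/a -/b -/c => h.
have : 0 <= c * (c * a - b ^+ 2) by move: h; rewrite expr2; lra.
by rewrite pmulr_rge0 // subr_ge0 mulrC.
Qed.

Lemma sym_pd_unitmx Q : sym_pd Q -> Q \in unitmx.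
Proof.
move=> [_ Qpos]; rewrite unitmxE unitfE; apply/negP => /det0P [v v0 vQ].
have := Qpos v^T; rewrite trmx_eq0 => /(_ v0).
by rewrite /qform trmxK vQ mul0mx mxE ltxx.
Qed.

Lemma sym_pd_scale_add (Q1 Q2 : 'M[R]_d) a b : 0 < a -> 0 < b ->
  sym_pd Q1 -> sym_pd Q2 -> sym_pd (a *: Q1 + b *: Q2).
Proof.
move=> a0 b0 [Q1T Q1pos] [Q2T Q2pos]; split.
  by rewrite linearD /= !linearZ /= Q1T Q2T.
move=> z z0; rewrite -/(qform _ z z) qformDZ.
by rewrite addr_gt0 // mulr_gt0 // ?Q1pos ?Q2pos.
Qed.

Lemma dotv_le_sqrt_qform Q x y : sym_pd Q -> ellipsoid 0 Q x ->
  dotv x y <= Num.sqrt (qform Q y y).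
Proof.
move=> Qpd; rewrite /ellipsoid /= subr0 => xE.
have QT := proj1 Qpd; set u := invmx Q *m x.
have xQu : x = Q *m u by rewrite /u mulKVmx ?sym_pd_unitmx.
have xy : dotv x y = qform Q u y by rewrite /dotv /qform xQu trmx_mul QT.
have uu1 : qform Q u u <= 1.
  by move: xE; rewrite /qform {1}xQu trmx_mul QT -[_ *m invmx Q *m x]mulmxA.
have uy : qform Q u y ^+ 2 <= qform Q y y.
  by apply: le_trans (qform_cauchy_schwarz u y Qpd) _; rewrite ler_piMl ?qform_ge0.
rewrite xy; apply: le_trans (ler_norm _) _.
by rewrite -sqrtr_sqr ler_sqrt ?qform_ge0.
Qed.

Lemma support_fun_ellipsoid0_le Q y : sym_pd Q ->
  0 <= support_fun (ellipsoid 0 Q) y <= Num.sqrt (qform Q y y).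
Proof.
move=> Qpd; set S := [set dotv x y | x in ellipsoid 0 Q].
have S_ub : ubound S (Num.sqrt (qform Q y y)).
  by move=> _ [x xE <-]; exact: dotv_le_sqrt_qform.
have S0 : S 0.
  exists 0; last by rewrite /dotv trmx0 mul0mx mxE.
  by rewrite /ellipsoid /= subr0 trmx0 !mul0mx mxE.
apply/andP; split; first by apply: ub_le_sup => //; exists (Num.sqrt (qform Q y y)).
by apply: ge_sup => //; exists 0.
Qed.

Lemma sqr_support_fun_ellipsoid0_le Q y : sym_pd Q ->
  support_fun (ellipsoid 0 Q) y ^+ 2 <= qform Q y y.
Proof.
move=> Qpd; have /andP[h0 hle] := support_fun_ellipsoid0_le y Qpd.
by rewrite -(sqr_sqrtr (qform_ge0 y Qpd)) lerXn2r ?nnegrE ?sqrtr_ge0.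
Qed.

Lemma normr_mxentry_le m n (A : 'M[R]_(m, n)) i j : `|A i j| <= `|A|.
Proof.
rewrite [leRHS]/Num.Def.normr /= mx_normrE.
by apply/bigmax_geP; right => /=; exists (i, j).
Qed.

Lemma dotv_le_support_fun (K : set 'cV[R]_d) x y : compact K -> K x ->
  dotv x y <= support_fun K y.
Proof.
move=> Kc Kx; apply: ub_le_sup; last by exists x.
have [M [_ KM]] := compact_bounded Kc.
have KM1 : K `<=` [set z | `|z| <= M + 1] by apply: KM; rewrite ltrDl.
exists ((M + 1) * \sum_i `|y i ord0|) => _ [z Kz <-].
rewrite /dotv mxE mulr_sumr; apply: le_trans (ler_norm _) _.
apply: le_trans (ler_norm_sum _ _ _) _; apply: ler_sum => i _.
rewrite mxE normrM ler_wpM2r //.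
exact: le_trans (normr_mxentry_le z i ord0) (KM1 _ Kz).
Qed.

Lemma subset_ellipsoid0 (K : set 'cV[R]_d) Q : sym_pd Q -> compact K ->
  (forall y, support_fun K y ^+ 2 <= qform Q y y) -> K `<=` ellipsoid 0 Q.
Proof.
move=> Qpd Kc hK x Kx; rewrite /ellipsoid /= subr0.
set y := invmx Q *m x; set t := (x^T *m invmx Q *m x) ord0 ord0.
have t_dotv : t = dotv x y by rewrite /t /dotv /y mulmxA.
have t_qform : t = qform Q y y.
  by rewrite /t /qform /y trmx_mul trmx_inv (proj1 Qpd) mulmxKV ?sym_pd_unitmx.
have t0 : 0 <= t by rewrite t_qform qform_ge0.
have tK : t <= support_fun K y by rewrite t_dotv dotv_le_support_fun.
have := hK y; rewrite -t_qform.
by move: tK t0; rewrite expr2; nra.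
Qed.
End Ellipsoids.

Theorem theorem1 (R : realType) (d : nat) (p beta : R) (Q1 Q2 : 'M[R]_d)
  (K : set 'cV[R]_d) :
  (1 <= d)%N -> 1 <= p -> p != 2 -> 0 < beta ->
  sym_pd Q1 -> sym_pd Q2 ->
  is_firey_psum p (ellipsoid 0 Q1) (ellipsoid 0 Q2) K ->
  K `<=` ellipsoid 0 (powR (1 + beta^-1) p^-1 *: Q1 + powR (1 + beta) p^-1 *: Q2).
Proof.
move=> _ p1 _ beta0 Q1pd Q2pd [Kc _ hK].
have [a0 b0] : 0 < (1 + beta^-1) `^ p^-1 /\ 0 < (1 + beta) `^ p^-1.
  by split; apply: powR_gt0; rewrite addr_gt0 ?invr_gt0.
apply: subset_ellipsoid0 => //; first exact: sym_pd_scale_add.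
move=> y; rewrite hK qformDZ.
have /andP[h1_ge0 _] := support_fun_ellipsoid0_le y Q1pd.
have /andP[h2_ge0 _] := support_fun_ellipsoid0_le y Q2pd.
apply: le_trans (firey_sqr_le p1 beta0 h1_ge0 h2_ge0) _.
by rewrite lerD // ler_wpM2l ?powR_ge0 ?sqr_support_fun_ellipsoid0_le.
Qed.
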